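(* Let $n\geqslant 3$, $X\geqslant 1$ and $\mathbf{y}\in\mathbb{N}^n$ with $1\leqslant y_i\leqslant X$ for all $i$. Then $$N_{\mathbf{y}}(X)\ll\frac{X^{n-1}}{\|\mathbf{d}\|_2},$$ where $\|\cdot\|_2$ is the Euclidean norm on $\mathbb{R}^n$ and $\mathbf{d}=(d_1,\dots,d_n)$.
   Context: $N_{\mathbf{y}}(X)=\#\{\mathbf{x}\in\mathbb{Z}^n:\ \max_i|x_i|\leqslant X,\ \sum_{i=1}^n x_i\prod_{j\neq i}y_j=0\}$. Let $N=2^n-1$; for $h\in\{1,\dots,N\}$ write $h=\sum_{j}\varepsilon_j(h)2^{j-1}$ with $\varepsilon_j(h)\in\{0,1\}$; $h\preceq\ell$ means $\varepsilon_j(h)\leqslant\varepsilon_j(\ell)$ for all $j$. Let $(z_h)$ be the unique reduced $N$-tuple of positive integers ($\gcd(z_h,z_\ell)=1$ whenever $h,\ell$ are $\preceq$-incomparable) with $y_j=\prod_h z_h^{\varepsilon_j(h)}$, and $d_i=\prod_h z_h^{1-\varepsilon_i(h)}$. *)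

From mathcomp Require Import all_boot all_order all_algebra.
From mathcomp Require Import reals.
Set Implicit Arguments. Unset Strict Implicit. Unset Printing Implicit Defensive.
Import Order.TTheory GRing.Theory Num.Theory.

(* Indices h range over {1, ..., 2^n - 1}; coordinates j over 'I_n
   (j : 'I_n stands for the paper's index j+1).  *)

Definition eps (n : nat) (j : 'I_n) (h : nat) : nat := odd (h %/ 2 ^ j).

Definition preceq (n : nat) (h l : nat) : bool :=
  [forall j : 'I_n, eps j h <= eps j l].

(* z : nat -> nat, only the values at h in [1, 2^n - 1] matter *)
Definition is_reduced_tuple (n : nat) (z : nat -> nat) : Prop :=
  (forall h, 1 <= h <= 2 ^ n - 1 -> 0 < z h) /\
  (forall h l, 1 <= h <= 2 ^ n - 1 -> 1 <= l <= 2 ^ n - 1 ->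
     ~~ preceq n h l -> ~~ preceq n l h -> coprime (z h) (z l)).

Definition y_of (n : nat) (z : nat -> nat) (j : 'I_n) : nat :=
  \prod_(1 <= h < 2 ^ n) z h ^ eps j h.

Definition d_of (n : nat) (z : nat -> nat) (i : 'I_n) : nat :=
  \prod_(1 <= h < 2 ^ n) z h ^ (1 - eps i h).

Local Open Scope ring_scope.
Definition linform (n : nat) (y : 'I_n -> nat) (x : 'I_n -> int) : int :=
  \sum_(i < n) x i * ((\prod_(j < n | j != i) y j)%N)%:Z.

(* Every such x has |x_i| <= K := truncn X, so x is encoded by
   c : {ffun 'I_n -> 'I_(2K+1)} via x_i = c_i - K (a bijection onto
   the box [-K, K]^n); the constraint |x_i| <= X is also imposed explicitly. *)
Definition N_y (R : realType) (n : nat) (y : 'I_n -> nat) (X : R) : nat :=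
  let K := Num.truncn X in
  #|[set c : {ffun 'I_n -> 'I_(K.*2.+1)} |
      let x := fun i => (val (c i))%:Z - K%:Z in
      [forall i, (`|x i|%:~R <= X)] && (linform y x == 0)]|.

Definition norm2 (R : realType) (n : nat) (v : 'I_n -> nat) : R :=
  Num.sqrt (\sum_(i < n) ((v i)%:R) ^+ 2).

(* Since prod_(j <> i) y_j = G d_i with G > 0, N_y(X) counts the points of the
   box [-X, X]^n on the hyperplane d . x = 0.  The z_h divisible by a given
   prime p have pairwise comparable indices h, so no prime divides all the d_i
   (an h of least weight among them would have no binary digit).  Hence, for
   d_k maximal, the d_j with j <> k generate Z/d_k, and since q_j d_j is a
   multiple of d_k for some q_j dividing y_j, every residue c mod d_k is some
   sum_(j <> k) t_j d_j with 0 <= t_j <= X.  Forgetting coordinate k, the d_k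
   translates by these t of the solution set are pairwise disjoint and lie in
   a box of side 3X + 1, so d_k N_y(X) <= (3X + 1)^(n-1), while ||d||_2 <= n d_k. *)

From mathcomp Require Import all_boot all_order all_algebra.
From mathcomp Require Import reals zify.
Import Order.TTheory GRing.Theory Num.Theory.

Set Implicit Arguments.
Unset Strict Implicit.
Unset Printing Implicit Defensive.

Lemma dvdn_prod I r (P : pred I) (F G : I -> nat) :
  (forall i, P i -> F i %| G i) ->
  \prod_(i <- r | P i) F i %| \prod_(i <- r | P i) G i.
Proof. by move=> dvFG; elim/big_ind2: _ => // *; exact: dvdn_mul. Qed.

Lemma gcdn_combination_mod m g S x : 0 < m -> g %| m -> S = g %[mod m] ->
  exists u v, u * x + v * S = gcdn x g %[mod m].
Proof.
move=> m_gt0 g_m S_g; have [-> | x_gt0] := posnP x.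
  by exists 0, 1; rewrite gcd0n mul1n.
have [e def_m] : exists e, m = e * g by exists (m %/ g); rewrite divnK.
have e_gt0 : 0 < e by move: m_gt0; rewrite def_m muln_gt0 => /andP[].
case: (egcdnP g x_gt0) => km kn def_gcd _.
(* [kn * e.-1 * g] stands for [- kn * g] modulo [m = e * g]. *)
exists km, (kn * e.-1).
rewrite -modnDmr -modnMmr S_g modnMmr modnDmr def_gcd.
have -> : kn * g + gcdn x g + kn * e.-1 * g = kn * m + gcdn x g by rewrite def_m; nia.
by rewrite modnMDl.
Qed.

Lemma bezout_biggcd_mod (I : eqType) (P : pred I) (d : I -> nat) m (r : seq I) :
  0 < m -> uniq r -> exists a : I -> nat,
  \sum_(i <- r | P i) a i * d i = gcdn m (\big[gcdn/0]_(i <- r | P i) d i) %[mod m].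
Proof.
move=> m_gt0; elim: r => [_ | x r IHr /= /andP[x_r uniq_r]].
  by exists (fun=> 0); rewrite !big_nil gcdn0 modnn mod0n.
have [a Sa] := IHr uniq_r; rewrite big_cons.
case Px: (P x); last by exists a; rewrite big_cons Px.
have [|u [v Suv]] := gcdn_combination_mod (d x) m_gt0 _ Sa; first exact: dvdn_gcdl.
exists (fun i => if i == x then u else v * a i).
rewrite big_cons Px eqxx gcdnCA -Suv big_distrr /= big_seq_cond [in RHS]big_seq_cond.
congr ((_ + _) %% m); apply: eq_bigr => i /andP[i_r _].
by rewrite ifN ?mulnA //; apply: contraNneq x_r => <-.
Qed.

Lemma residue_representatives (I : finType) (P : pred I) (d q : I -> nat) m :
  0 < m -> gcdn m (\big[gcdn/0]_(i | P i) d i) = 1 ->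
  (forall i, 0 < q i) -> (forall i, P i -> m %| q i * d i) ->
  exists t : nat -> I -> nat, forall c,
    (forall i, t c i < q i) /\ \sum_(i | P i) t c i * d i = c %[mod m].
Proof.
move=> m_gt0 gcd1 q_gt0 m_qd.
have [a Sa] := bezout_biggcd_mod P d m_gt0 (index_enum_uniq I).
rewrite gcd1 in Sa.
exists (fun c i => c * a i %% q i) => c; split => [i|]; first by rewrite ltn_mod.
have term i : P i -> (c * a i %% q i) * d i = c * (a i * d i) %[mod m].
  move=> Pi; have [w qd] := dvdnP (m_qd i Pi).
  by rewrite mulnA {2}(divn_eq (c * a i) (q i)) mulnDl -mulnA qd mulnA modnMDl.
rewrite -modn_summ (eq_bigr _ term) modn_summ -big_distrr /=.
by rewrite -modnMmr Sa modnMmr muln1.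
Qed.

(* [f] encodes the point [x = f - K] of the box [[-K, K]^n]. *)
Definition box_solutions n K (d : 'I_n -> nat) : {set {ffun 'I_n -> 'I_(K.*2.+1)}} :=
  [set f : {ffun 'I_n -> 'I_(K.*2.+1)} | \sum_i f i * d i == K * \sum_i d i].

Section TranslatedBoxSolutions.

Variables (n K L : nat) (d : 'I_n -> nat) (k : 'I_n) (t : nat -> 'I_n -> nat).
Hypotheses (dk_gt0 : 0 < d k) (t_le : forall c j, t c j <= L)
  (t_mod : forall c, \sum_(j | j != k) t c j * d j = c %[mod d k]).

Let S := box_solutions K d.

Lemma box_solutions_translate_sum f c : f \in S ->
  f k * d k + \sum_(j | j != k) (f j + t c j) * d j
    = K * \sum_i d i + \sum_(j | j != k) t c j * d j.
Proof.
rewrite inE => /eqP <-; rewrite [in RHS](bigD1 k) //= -addnA -big_split /=.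
by congr (_ + _); apply: eq_bigr => j _; rewrite mulnDl.
Qed.

Lemma box_solutions_translate_inj f f' (c c' : 'I_(d k)) : f \in S -> f' \in S ->
  (forall j, j != k -> f j + t c j = f' j + t c' j :> nat) -> (c, f) = (c', f').
Proof.
move=> fS f'S eq_ff'.
have eq_sum : \sum_(j | j != k) (f j + t c j) * d j = \sum_(j | j != k) (f' j + t c' j) * d j.
  by apply: eq_bigr => j /eq_ff' ->.
have sum_f := box_solutions_translate_sum c fS.
have sum_f' := box_solutions_translate_sum c' f'S.
have sum_mod g (b : 'I_(d k)) : g \in S ->
    \sum_(j | j != k) (g j + t b j) * d j = K * \sum_i d i + b %[mod d k].
  move=> gS; rewrite -(modnMDl (g k)) (box_solutions_translate_sum b gS).
  by rewrite -modnDmr t_mod modnDmr.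
have cc' : c = c'.
  apply: val_inj; move: (sum_mod f c fS); rewrite eq_sum sum_mod // => /eqP.
  by rewrite eqn_modDl !modn_small // => /eqP.
subst c'; congr (_, _); apply/ffunP => j; apply: val_inj.
case: (eqVneq j k) => [-> | jk]; last exact: (addIn (eq_ff' j jk)).
apply/eqP; rewrite -(eqn_pmul2r dk_gt0); apply/eqP.
by apply: (@addIn (\sum_(j | j != k) (f j + t c j) * d j)); rewrite sum_f eq_sum sum_f'.
Qed.

(* Coordinate [k] forgotten, the translates [f + t c] stay apart for distinct
   residues [c], which are recovered modulo [d k]. *)
Lemma card_box_solutions_translate : d k * #|S| <= (K.*2 + L).+1 ^ n.-1.
Proof.
pose Phi (p : 'I_(d k) * {ffun 'I_n -> 'I_(K.*2.+1)}) :=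
  [ffun j => if j == k then ord0 else inord (p.2 j + t p.1 j) : 'I_(K.*2 + L).+1].
have Phi_inj : {in setX [set: 'I_(d k)] S &, injective Phi}.
  move=> [c f] [c' f']; rewrite !in_setX /= => /andP[_ fS] /andP[_ f'S] /ffunP eqPhi.
  apply: box_solutions_translate_inj => // j jk; move/(congr1 val): (eqPhi j).
  have bound (g : {ffun 'I_n -> 'I_(K.*2.+1)}) b : g j + t b j < (K.*2 + L).+1.
    by rewrite ltnS leq_add // -ltnS.
  by rewrite !ffunE (negbTE jk) /= !inordK ?bound.
have Phi_on : Phi @: setX [set: 'I_(d k)] S \subset pffun_on ord0 (predC1 k) predT.
  apply/subsetP => _ /imsetP[p _ ->]; apply/pffun_onP; split => //.
  by apply/subsetP => j; rewrite !inE ffunE; apply: contraNneq => ->; rewrite eqxx.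
have := subset_leq_card Phi_on.
by rewrite card_pffun_on card_in_imset // cardsX cardsT !card_ord cardC1 card_ord.
Qed.

End TranslatedBoxSolutions.

Definition weight n h := \sum_(j < n) @eps n j h.

Definition G_of n (z : nat -> nat) : nat :=
  \prod_(1 <= h < 2 ^ n) z h ^ (weight n h).-1.

Definition q_of n (z : nat -> nat) (k j : 'I_n) : nat :=
  \prod_(1 <= h < 2 ^ n) z h ^ ((1 - eps k h) * eps j h).

Lemma eps_le1 n (j : 'I_n) h : eps j h <= 1.
Proof. by rewrite /eps; case: odd. Qed.

Lemma digits_eq0 n h : h < 2 ^ n -> (forall j, j < n -> ~~ odd (h %/ 2 ^ j)) -> h = 0.
Proof.
elim: n h => [|n IHn] h h_lt digits0; first by move: h_lt; rewrite expn0 ltnS leqn0 => /eqP.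
have half0 : h./2 = 0.
  apply: IHn => [|j j_lt]; first by rewrite -divn2 ltn_divLR // -expnSr.
  by rewrite -divn2 -divnMA -expnS digits0.
have := digits0 0 isT; rewrite expn0 divn1 => /negbTE h_even.
by rewrite -[h]odd_double_half half0 h_even.
Qed.

Lemma weight_gt0 n h : 0 < h < 2 ^ n -> 0 < weight n h.
Proof.
case/andP=> h_gt0 h_lt; rewrite lt0n; apply: contraTneq h_gt0 => /eqP.
rewrite sum_nat_eq0 => /forallP eps0; rewrite -leqNgt leqn0; apply/eqP.
by apply: digits_eq0 h_lt _ => j j_lt; have := eps0 (Ordinal j_lt); rewrite /eps; case: odd.
Qed.

Lemma preceq_weight n h l :
  preceq n h l -> weight n h <= weight n l ?= iff [forall j : 'I_n, eps j h == eps j l].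
Proof. by move=> /forallP h_l; apply: leqif_sum => j _; apply/leqif_eq/h_l. Qed.

Lemma prod_y_of_neq n (z : nat -> nat) (i : 'I_n) :
  \prod_(j < n | j != i) y_of z j = G_of n z * d_of z i.
Proof.
rewrite /y_of /G_of /d_of (exchange_big_dep xpredT) //= -big_split /=.
rewrite !big_seq; apply: eq_bigr => h; rewrite mem_index_iota => h_range.
rewrite -expnD -expn_sum (eq_bigl (fun j => j != i)) => [|j]; last by rewrite andbT.
congr (_ ^ _); have := weight_gt0 h_range; rewrite /weight (bigD1 i) //=.
have := eps_le1 i h; set S := \sum_(j < n | j != i) _; lia.
Qed.

Section ReducedTuple.

Variables (n : nat) (z : nat -> nat).
Hypothesis z_reduced : is_reduced_tuple n z.

Lemma reduced_gt0 h : 0 < h < 2 ^ n -> 0 < z h.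
Proof. by move=> h_range; case: z_reduced => z_gt0 _; apply: z_gt0; lia. Qed.

Lemma reduced_prod_gt0 (e : nat -> nat) : 0 < \prod_(1 <= h < 2 ^ n) z h ^ e h.
Proof.
rewrite big_seq; apply: prodn_cond_gt0 => h; rewrite mem_index_iota => h_range.
by rewrite expn_gt0 reduced_gt0 // orbT.
Qed.

Lemma reduced_comparable p h l : prime p -> 0 < h < 2 ^ n -> 0 < l < 2 ^ n ->
  p %| z h -> p %| z l -> preceq n h l || preceq n l h.
Proof.
move=> p_prime h_range l_range p_zh p_zl; case: z_reduced => _ z_coprime.
apply: contraT => /norP[h_l l_h].
have /eqP gcd1 : coprime (z h) (z l) by apply: z_coprime => //; lia.
have : p %| gcdn (z h) (z l) by rewrite dvdn_gcd p_zh p_zl.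
by rewrite gcd1 dvdn1 => /eqP p1; rewrite p1 in p_prime.
Qed.

Lemma prime_dvd_d_of p (i : 'I_n) : prime p -> p %| d_of z i ->
  exists2 h, (0 < h < 2 ^ n) && (eps i h == 0) & p %| z h.
Proof.
move=> p_prime; rewrite /d_of (Euclid_dvd_prod _ _ _ p_prime) big_has.
case/hasP => h; rewrite mem_index_iota Euclid_dvdX // => h_range /andP[p_zh eps_h].
by exists h => //; rewrite subn_gt0 ltnS leqn0 in eps_h; rewrite h_range eps_h.
Qed.

Lemma biggcd_d_of_eq1 : 0 < n -> \big[gcdn/0]_(i < n) d_of z i = 1.
Proof.
move=> n_gt0; set g := \big[gcdn/0]_(i < n) _.
have g_gt0 : 0 < g by rewrite /g (bigD1 (Ordinal n_gt0)) // gcdn_gt0 reduced_prod_gt0.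
apply/eqP; rewrite eqn_leq g_gt0 andbT leqNgt; apply/negP => g_gt1.
have p_prime := pdiv_prime g_gt1; set p := pdiv g in p_prime.
have p_d (i : 'I_n) : p %| d_of z i by move/dvdn_biggcdP: (pdiv_dvd g) => /(_ i isT).
pose W := [pred h : 'I_(2 ^ n) | (0 < h) && (p %| z h)].
have range (h : 'I_(2 ^ n)) : 0 < h -> 0 < h < 2 ^ n by move=> h_gt0; rewrite h_gt0 ltn_ord.
have W_of (i : 'I_n) : exists2 h : 'I_(2 ^ n), W h & eps i h = 0.
  have [h /andP[h_range /eqP eps_h] p_zh] := prime_dvd_d_of p_prime (p_d i).
  have h_lt : h < 2 ^ n by case/andP: h_range.
  by exists (Ordinal h_lt); rewrite // inE p_zh andbT; case/andP: h_range.
have [h0 W_h0 _] := W_of (Ordinal n_gt0).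
case: (arg_minnP (fun h : 'I_(2 ^ n) => weight n h) W_h0) => m /andP[m_gt0 p_zm] m_min.
have eps_m (i : 'I_n) : eps i m = 0.
  have [h /[dup] W_h /andP[h_gt0 p_zh] eps_h] := W_of i.
  have := reduced_comparable p_prime (range m m_gt0) (range h h_gt0) p_zm p_zh.
  case/orP=> [/forallP/(_ i) | h_m].
    by rewrite eps_h leqn0 => /eqP.
  have [h_le_m] := preceq_weight h_m.
  by rewrite eqn_leq h_le_m m_min //= => /esym/forallP/(_ i)/eqP <-.
have := weight_gt0 (range m m_gt0).
by rewrite /weight big1 // => i _; apply: eps_m.
Qed.

Lemma q_of_dvd_y_of (k j : 'I_n) : q_of z k j %| y_of z j.
Proof.
apply: dvdn_prod => h _; apply: dvdn_exp2l.
by have := eps_le1 k h; have := eps_le1 j h; nia.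
Qed.

Lemma d_of_dvd_q_of_mul (k j : 'I_n) : d_of z k %| q_of z k j * d_of z j.
Proof.
rewrite /q_of /d_of -big_split /=; apply: dvdn_prod => h _; rewrite -expnD dvdn_exp2l //.
by have := eps_le1 k h; have := eps_le1 j h; nia.
Qed.

Lemma card_box_solutions_d_of K (k : 'I_n) : (forall j : 'I_n, y_of z j <= K) ->
  d_of z k * #|box_solutions K (d_of (n:=n) z)| <= (K.*2 + K).+1 ^ n.-1.
Proof.
move=> y_le; have dk_gt0 : 0 < d_of z k := reduced_prod_gt0 _.
have gcd1 : gcdn (d_of z k) (\big[gcdn/0]_(j | j != k) d_of z j) = 1.
  by have := biggcd_d_of_eq1 (leq_ltn_trans (leq0n k) (ltn_ord k)); rewrite (bigD1 k).
have [t t_spec] := residue_representatives dk_gt0 gcd1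
  (fun j => reduced_prod_gt0 _) (fun j _ => d_of_dvd_q_of_mul k j).
apply: (card_box_solutions_translate K dk_gt0 _ (fun c => (t_spec c).2)) => c j.
apply: leq_trans (ltnW ((t_spec c).1 j)) (leq_trans _ (y_le j)).
exact: dvdn_leq (reduced_prod_gt0 _) (q_of_dvd_y_of k j).
Qed.

End ReducedTuple.

Local Open Scope ring_scope.

Lemma N_y_le_card_box_solutions (R : realType) n (y d : 'I_n -> nat) G (X : R) :
  (0 < G)%N -> (forall i, \prod_(j < n | j != i) y j = G * d i)%N ->
  (N_y y X <= #|box_solutions (Num.truncn X) d|)%N.
Proof.
move=> G_gt0 prod_y; apply: subset_leq_card; apply/subsetP => f.
rewrite !inE /linform => /andP[_]; set K := Num.truncn X.
rewrite (eq_bigr (fun i => G%:Z * ((f i)%:Z * (d i)%:Z - K%:Z * (d i)%:Z))) => [|i _]; last first.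
  by rewrite prod_y PoszM mulrCA mulrBl.
rewrite -mulr_sumr mulf_eq0 gt_eqF ?ltz_nat //= sumrB subr_eq0.
have sum_natz (a : 'I_n -> nat) : \sum_i (a i)%:Z * (d i)%:Z = (\sum_i a i * d i)%N%:Z.
  by rewrite (big_morph Posz PoszD (erefl : Posz 0 = 0)); apply: eq_bigr => i _; rewrite PoszM.
by rewrite (sum_natz (fun i => f i)) (sum_natz (fun=> K)) eqz_nat big_distrr.
Qed.

Lemma norm2_natE (R : realType) n (d : 'I_n -> nat) :
  norm2 R d = Num.sqrt ((\sum_i d i ^ 2)%N%:R : R).
Proof. by rewrite /norm2 natr_sum; congr Num.sqrt; apply: eq_bigr => i _; rewrite natrX. Qed.

Lemma norm2_gt0 (R : realType) n (d : 'I_n -> nat) k : (0 < d k)%N -> 0 < norm2 R d.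
Proof.
by move=> dk_gt0; rewrite norm2_natE sqrtr_gt0 ltr0n (bigD1 k) //= addn_gt0 expn_gt0 dk_gt0.
Qed.

Lemma norm2_le (R : realType) n (d : 'I_n -> nat) (M : nat) :
  (forall i, d i <= M)%N -> norm2 R d <= (n * M)%N%:R.
Proof.
move=> d_le; rewrite norm2_natE.
have -> : (n * M)%N%:R = Num.sqrt (((n * M) ^ 2)%N%:R : R) by rewrite natrX sqrtr_sqr ger0_norm.
rewrite ler_sqrt // ler_nat (@leq_trans (\sum_(i < n) M ^ 2)) //.
  by apply: leq_sum => i _; rewrite leq_exp2r.
by rewrite sum_nat_const card_ord expnMn leq_mul2r; apply/orP; right; nia.
Qed.

Lemma le_div_norm2 (R : realType) n (d : 'I_n -> nat) k N B :
  (forall i, d i <= d k)%N -> (0 < d k)%N -> (N * d k <= B)%N ->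
  N%:R <= (n * B)%N%:R / norm2 R d.
Proof.
move=> d_max dk_gt0 NB; rewrite ler_pdivlMr ?(norm2_gt0 R dk_gt0) //.
apply: le_trans (_ : N%:R * (n * d k)%N%:R <= _); first by rewrite ler_wpM2l ?norm2_le.
by rewrite -natrM ler_nat mulnCA leq_mul2l NB orbT.
Qed.

Unset Implicit Arguments.

Theorem mainTheorem5 (R : realType) (n : nat) (hn : (3 <= n)%N) :
  exists C : R, 0 < C /\
    forall (X : R) (y : 'I_n -> nat) (z : nat -> nat),
      1 <= X ->
      (forall i, (1 <= y i)%N /\ (y i)%:R <= X) ->
      is_reduced_tuple n z ->
      (forall j, y j = y_of (n:=n) z j) ->
      (N_y y X)%:R <= C * X ^+ (n - 1) / @norm2 R n (d_of (n:=n) z).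
Proof.
have n_gt0 : (0 < n)%N by apply: leq_trans hn.
exists (n * 4 ^ n.-1)%N%:R; split; first by rewrite ltr0n muln_gt0 expn_gt0 n_gt0.
move=> X y z X_ge1 y_le z_reduced y_def; set K := Num.truncn X.
have X_ge0 : 0 <= X by apply: le_trans X_ge1.
have y_le_K (j : 'I_n) : (y_of z j <= K)%N.
  by rewrite -y_def truncn_ge_nat ?(y_le j).2.
have [k _ d_max] := @arg_maxnP _ (Ordinal n_gt0) xpredT (d_of (n:=n) z) isT.
have prod_y i : (\prod_(j < n | j != i) y j = G_of n z * d_of z i)%N.
  by rewrite -prod_y_of_neq; apply: eq_bigr => j _.
have N_le := N_y_le_card_box_solutions X (reduced_prod_gt0 z_reduced _) prod_y.
have NB : (N_y y X * d_of z k <= (K.*2 + K).+1 ^ n.-1)%N.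
  rewrite mulnC (leq_trans _ (card_box_solutions_d_of z_reduced k y_le_K)) //.
  by rewrite leq_mul2l N_le orbT.
apply: (le_trans (le_div_norm2 R (fun i => d_max i isT) (reduced_prod_gt0 z_reduced _) NB)).
rewrite ler_wpM2r ?invr_ge0 ?sqrtr_ge0 // subn1 !natrM -mulrA ler_wpM2l //.
rewrite !natrX -exprMn lerXn2r ?nnegrE ?mulr_ge0 //.
have K_gt0 : (0 < K)%N by rewrite truncn_gt0.
apply: (@le_trans _ _ (4 * K)%N%:R); first by rewrite ler_nat -addnn; lia.
by rewrite natrM ler_wpM2l // truncn_le.
Qed.
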